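(* Let $H$ be a simple, strongly connected digraph with at least one arc, let $k$ be a positive integer, and let $T$ be a tournament that does not contain $k$ pairwise arc-disjoint immersion copies of $H$. Then there is a set $F$ of at most $6d_{\mathrm{ctw}}\|H\|^2k^2$ arcs of $T$ such that $T-F$ does not contain $H$ as an immersion.
   Context: $\|H\|:=|V(H)|+|A(H)|$. A tournament is a simple digraph with exactly one arc between every pair of distinct vertices. An immersion copy of $H$ in a digraph $G$ is a subgraph $\widehat H$ of $G$ with a map sending vertices of $H$ to distinct vertices of $\widehat H$ and each arc $(u,v)$ of $H$ to a directed path from the image of $u$ to the image of $v$, such that each arc of $\widehat H$ lies on exactly one of these paths; $G$ contains $H$ as an immersion if it has such a subgraph. For an ordering $\sigma$ (bijection $V(T)\to[|V(T)|]$) and $\alpha\in\{0,\dots,|V(T)|\}$, the $\alpha$-cut is the set of arcs $(u,v)$ with $\sigma(u)>\alpha\ge\sigma(v)$; the width of $\sigma$ is the maximum size of its cuts and the cutwidth $\mathrm{ctw}(T)$ is the minimum width of an ordering. $d_{\mathrm{ctw}}$ is a fixed constant, which is the square of an even integer, such that every tournament not containing a simple digraph $H'$ as an immersion has cutwidth at most $d_{\mathrm{ctw}}\|H'\|^2$ (such a constant exists by a result of Fomin and Pilipczuk). *)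

From mathcomp Require Import all_boot.
Set Implicit Arguments. Unset Strict Implicit. Unset Printing Implicit Defensive.

Definition simple_digraph (V : finType) (g : rel V) : Prop :=
  irreflexive g.

Definition tournament (V : finType) (g : rel V) : Prop :=
  irreflexive g /\ forall u v : V, u != v -> g u v != g v u.

Definition strongly_connected (V : finType) (g : rel V) : Prop :=
  forall x y : V, connect g x y.

Definition has_arc (V : finType) (g : rel V) : Prop :=
  exists u v, g u v.

Definition arcs (V : finType) (g : rel V) : {set V * V} :=
  [set a | g a.1 a.2].

Definition dnorm (V : finType) (g : rel V) : nat := #|V| + #|arcs g|.

Definition del_arcs (V : finType) (g : rel V) (F : {set V * V}) : rel V :=
  fun u v => g u v && ((u, v) \notin F).

(* A directed path from x to y given by the list p of vertices after x. *)
Definition dpath (V : finType) (g : rel V) (x y : V) (p : seq V) : bool :=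
  [&& path g x p, last x p == y & uniq (x :: p)].

Definition path_arcs (V : finType) (x : V) (p : seq V) : seq (V * V) :=
  zip (x :: p) p.

Definition immersion_model (VH V : finType) (h : rel VH) (g : rel V)
  (phi : VH -> V) (P : VH -> VH -> seq V) : Prop :=
  [/\ injective phi,
      (forall u v, h u v -> dpath g (phi u) (phi v) (P u v)) &
      (forall u v u' v', h u v -> h u' v' -> (u, v) != (u', v') ->
         forall a, a \in path_arcs (phi u) (P u v) ->
                   a \notin path_arcs (phi u') (P u' v'))].

Definition model_arcs (VH V : finType) (h : rel VH)
  (phi : VH -> V) (P : VH -> VH -> seq V) : {set V * V} :=
  [set a | [exists u, exists v, h u v && (a \in path_arcs (phi u) (P u v))]].

Definition contains_immersion (VH V : finType) (h : rel VH) (g : rel V) : Prop :=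
  exists phi P, @immersion_model VH V h g phi P.

Definition contains_k_disjoint_immersions (VH V : finType) (h : rel VH)
  (g : rel V) (k : nat) : Prop :=
  exists (phi : 'I_k -> VH -> V) (P : 'I_k -> VH -> VH -> seq V),
    (forall i, immersion_model h g (phi i) (P i)) /\
    (forall i j, i != j ->
       [disjoint model_arcs h (phi i) (P i) & model_arcs h (phi j) (P j)]).

(* cutwidth: ordering sigma : V -> {1..n} written 0-based as 'I_#|V|;
   the alpha-cut consists of arcs (u,v) with sigma u > alpha >= sigma v
   (1-based), i.e. alpha <= sigma0 u and sigma0 v < alpha (0-based). *)
Definition cut (V : finType) (g : rel V) (sigma : V -> 'I_#|V|) (alpha : nat)
  : {set V * V} :=
  [set a | [&& g a.1 a.2, alpha <= sigma a.1 & sigma a.2 < alpha]].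

Definition ctw_le (V : finType) (g : rel V) (c : nat) : Prop :=
  exists sigma : V -> 'I_#|V|, bijective sigma /\
    forall alpha, alpha <= #|V| -> #|cut g sigma alpha| <= c.

(* d is an admissible value of the constant d_ctw *)
Definition ctw_constant (d : nat) : Prop :=
  (exists m, d = (2 * m) ^ 2) /\
  forall (V : finType) (t : rel V) (VH : finType) (h : rel VH),
    tournament t -> simple_digraph h -> ~ contains_immersion h t ->
    ctw_le t (d * dnorm h ^ 2).

From mathcomp Require Import all_boot zify.
From Stdlib Require Import Classical.
Set Implicit Arguments. Unset Strict Implicit. Unset Printing Implicit Defensive.

(* Induction on k, keeping the stronger bound |F| + 2X <= 4Xk^2 with X = d_ctw ||H||^2.
   Write k = a + b with a = ceil(k/2) and b = floor(k/2); if T has no a copies of H we recurse.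
   Otherwise T, having no k copies, does not contain the disjoint union of k copies of H, so T has
   a vertex ordering of width at most d_ctw (k ||H||)^2 = k^2 X.  Take the position j at which the
   vertices before j contain no a copies while those up to j do; then the vertices after j contain
   no b copies.  Recurse on both sides and also delete the cuts just before and just after j: no
   arc of what remains goes back between the blocks "before j", "j" and "after j", so a strongly
   connected H immerses in a single block, which is impossible.  The count closes because
   4a^2 + 4b^2 <= 2k^2 + 2, so the two halves save enough to pay for the two cuts. *)


Section PathArcs.
Variable T : finType.
Implicit Types (x : T) (p : seq T) (a : T * T).

Lemma mem_path_arcs x p a : a \in path_arcs x p -> a.1 \in x :: p /\ a.2 \in p.
Proof.
elim: p x => [|y p IH] x //; rewrite /path_arcs /= inE => /orP [/eqP -> /=|].
  by split; apply: mem_head.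
by case/IH => a1 a2; split; rewrite inE ?a1 ?a2 orbT.
Qed.

Lemma path_arcs_rel (e : rel T) x p a :
  path e x p -> a \in path_arcs x p -> e a.1 a.2.
Proof.
elim: p x => [|y p IH] x //= /andP [exy ep].
by rewrite /path_arcs /= inE => /orP [/eqP -> //|]; apply: IH.
Qed.

Lemma path_of_arcs (e : rel T) x p :
  {in path_arcs x p, forall a, e a.1 a.2} -> path e x p.
Proof.
elim: p x => [|y p IH] x //= arcs_e.
rewrite (arcs_e (x, y)) ?mem_head //=; apply: IH => a a_in.
by apply: arcs_e; rewrite /path_arcs /= inE a_in orbT.
Qed.

Lemma path_arcs_map (U : finType) (f : T -> U) x p :
  path_arcs (f x) (map f p) = map (fun a => (f a.1, f a.2)) (path_arcs x p).
Proof. by elim: p x => [|y p IH] x //=; rewrite /path_arcs /= -IH. Qed.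

Lemma path_bounds (e : rel T) (f : T -> nat) x p :
  {homo f : y z / e y z >-> y <= z} -> path e x p ->
  {in x :: p, forall w, f x <= f w <= f (last x p)}.
Proof.
move=> f_homo; elim: p x => [|y p IH] x /=.
  by move=> _ w; rewrite inE => /eqP ->; rewrite leqnn.
move=> /andP [/f_homo fxy /IH bounds] w; rewrite inE => /orP [/eqP ->|/bounds].
  by rewrite leqnn; case/andP: (bounds y (mem_head _ _)) => _; apply: leq_trans fxy.
by case/andP=> fyw ->; rewrite (leq_trans fxy).
Qed.

End PathArcs.

Definition induced (V : finType) (t : rel V) (S : {set V}) : rel V :=
  fun x y => [&& t x y, x \in S & y \in S].

Definition level (V : finType) (g : rel V) (f : V -> nat) (c : nat) : rel V :=
  fun x y => [&& g x y, f x == c & f y == c].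

Definition copies (VH : finType) (h : rel VH) (k : nat) : rel ('I_k * VH) :=
  fun p q => (p.1 == q.1) && h p.2 q.2.
Arguments copies {VH} h k.

Section Immersions.
Variables (VH : finType) (h : rel VH).

Lemma immersion_model_on_arcs (V : finType) (g g' : rel V) phi P :
  immersion_model h g phi P ->
  (forall u v, h u v -> {in path_arcs (phi u) (P u v), forall a, g' a.1 a.2}) ->
  immersion_model h g' phi P.
Proof.
move=> [phi_inj paths arc_disj] arcs_g'; split=> // u v huv.
case/and3P: (paths u v huv) => _ last_P uniq_P.
by rewrite /dpath last_P uniq_P path_of_arcs //; apply: arcs_g'.
Qed.

Lemma immersion_model_sub (V : finType) (g g' : rel V) phi P :
  subrel g g' -> immersion_model h g phi P -> immersion_model h g' phi P.
Proof.
move=> gg' model; apply: (immersion_model_on_arcs model) => u v huv a a_in.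
case: model => _ paths _; case/and3P: (paths u v huv) => path_P _ _.
exact/gg'/(path_arcs_rel path_P a_in).
Qed.

Lemma contains_immersion_sub (V : finType) (g g' : rel V) :
  subrel g g' -> contains_immersion h g -> contains_immersion h g'.
Proof. by move=> gg' [phi [P model]]; exists phi, P; apply: immersion_model_sub model. Qed.

Lemma k_disjoint_immersions_sub (V : finType) (g g' : rel V) k :
  subrel g g' -> contains_k_disjoint_immersions h g k ->
  contains_k_disjoint_immersions h g' k.
Proof.
move=> gg' [phi [P [models disj]]]; exists phi, P; split=> // i.
exact: immersion_model_sub (models i).
Qed.

Lemma model_arcs_rel (V : finType) (g : rel V) phi P a :
  immersion_model h g phi P -> a \in model_arcs h phi P -> g a.1 a.2.
Proof.
move=> [_ paths _]; rewrite inE => /existsP [u /existsP [v /andP [huv a_in]]].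
by case/and3P: (paths u v huv) => path_P _ _; apply: path_arcs_rel path_P a_in.
Qed.

Lemma contains_one_immersion (V : finType) (g : rel V) :
  contains_immersion h g -> contains_k_disjoint_immersions h g 1.
Proof.
move=> [phi [P model]]; exists (fun=> phi), (fun=> P); split=> // i j.
by rewrite (ord1 i) (ord1 j) eqxx.
Qed.

Lemma k_disjoint_immersions_contains (V : finType) (g : rel V) k :
  0 < k -> contains_k_disjoint_immersions h g k -> contains_immersion h g.
Proof.
by move=> k_gt0 [phi [P [models _]]]; exists (phi (Ordinal k_gt0)), (P (Ordinal k_gt0)).
Qed.

Lemma immersion_has_arc (V : finType) (g : rel V) :
  simple_digraph h -> has_arc h -> contains_immersion h g -> exists x y, g x y.
Proof.
move=> h_irr [u [v huv]] [phi [P [phi_inj paths _]]].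
move: (paths u v huv); rewrite /dpath; case: (P u v) => [|y p] /=.
  by rewrite andbT => /eqP /phi_inj uv; rewrite uv h_irr in huv.
by case/andP=> /andP [gxy _] _; exists (phi u), y.
Qed.

Lemma k_disjoint_immersions_add (V : finType) (g g1 g2 : rel V) a b :
  subrel g1 g -> subrel g2 g -> (forall x y, g1 x y -> ~~ g2 x y) ->
  contains_k_disjoint_immersions h g1 a -> contains_k_disjoint_immersions h g2 b ->
  contains_k_disjoint_immersions h g (a + b).
Proof.
move=> g1g g2g g12 [phi1 [P1 [models1 disj1]]] [phi2 [P2 [models2 disj2]]].
exists (fun i => match split i with inl i1 => phi1 i1 | inr i2 => phi2 i2 end).
exists (fun i => match split i with inl i1 => P1 i1 | inr i2 => P2 i2 end).
have cross i1 i2 : [disjoint model_arcs h (phi1 i1) (P1 i1) & model_arcs h (phi2 i2) (P2 i2)].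
  apply/pred0P => e /=; apply/andP => -[/(model_arcs_rel (models1 i1)) e1].
  by move/(model_arcs_rel (models2 i2)); rewrite (negbTE (g12 _ _ e1)).
split=> [i | i j ij].
  by case: (split i) => i'; [apply: immersion_model_sub g1g _ | apply: immersion_model_sub g2g _].
have split_ne : split i != split j.
  by apply: contra ij => /eqP eq_ij; apply/eqP/(can_inj splitK).
case: (split i) (split j) split_ne => [i1|i2] [j1|j2] ne.
- by apply: disj1; apply: contra ne => /eqP ->.
- exact: cross.
- by rewrite disjoint_sym.
- by apply: disj2; apply: contra ne => /eqP ->.
Qed.

Lemma immersion_model_level (V : finType) (g : rel V) (f : V -> nat) phi P u0 :
  strongly_connected h -> {homo f : x y / g x y >-> x <= y} ->
  immersion_model h g phi P -> immersion_model h (level g f (f (phi u0))) phi P.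
Proof.
move=> h_sc f_homo model; case: (model) => _ paths _.
have bounds u v : h u v -> {in phi u :: P u v, forall w, f (phi u) <= f w <= f (phi v)}.
  move=> huv; case/and3P: (paths u v huv) => path_P /eqP <- _.
  exact: path_bounds f_homo path_P.
have f_phi_homo : {homo f \o phi : u v / h u v >-> u <= v}.
  by move=> u v huv; have /andP [] := bounds u v huv _ (mem_head _ _).
have f_phi_const u v : f (phi u) = f (phi v).
  have f_phi_le u' v' : f (phi u') <= f (phi v').
    case/connectP: (h_sc u' v') => q path_q ->.
    by have /andP [] := path_bounds f_phi_homo path_q (mem_head _ _).
  by apply/eqP; rewrite eqn_leq !f_phi_le.
apply: (immersion_model_on_arcs model) => u v huv [x y] xy_in.
case: (mem_path_arcs xy_in) => /= x_in y_in.
case/and3P: (paths u v huv) => path_P _ _; have gxy := path_arcs_rel path_P xy_in.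
have /andP [ux _] := bounds u v huv x x_in.
have /andP [_ yv] := bounds u v huv y (@mem_behead _ (phi u :: P u v) y y_in).
move: (f_homo _ _ gxy) ux yv; rewrite /level gxy (f_phi_const u0 u) (f_phi_const v u) /=.
lia.
Qed.

End Immersions.

Section Copies.
Variables (VH : finType) (h : rel VH).

Lemma copies_simple k : simple_digraph h -> simple_digraph (copies h k).
Proof. by move=> h_irr [i u]; rewrite /copies /= h_irr andbF. Qed.

Lemma dnorm_copies k : dnorm (copies h k) = k * dnorm h.
Proof.
rewrite /dnorm card_prod card_ord mulnDr; congr (_ + _).
pose lift_arc (p : 'I_k * (VH * VH)) := ((p.1, p.2.1), (p.1, p.2.2)).
have lift_inj : injective lift_arc by move=> [i [u v]] [j [u' v']] [-> -> _ ->].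
have -> : arcs (copies h k) = lift_arc @: setX [set: 'I_k] (arcs h).
  apply/setP => -[[i u] [j v]]; rewrite inE /copies /=; apply/andP/imsetP.
    by case=> /eqP <- huv; exists (i, (u, v)); rewrite // !inE.
  by case=> -[i' [u' v']]; rewrite !inE => huv [-> -> -> ->]; rewrite eqxx.
by rewrite card_imset // cardsX cardsT card_ord.
Qed.

Lemma copies_immersion (V : finType) (g : rel V) k :
  contains_immersion (copies h k) g -> contains_k_disjoint_immersions h g k.
Proof.
move=> [phi [P [phi_inj paths arc_disj]]].
have copy_arc i u v : h u v -> copies h k (i, u) (i, v) by rewrite /copies /= eqxx.
exists (fun i u => phi (i, u)), (fun i u v => P (i, u) (i, v)); split=> [i | i j ij].
  split=> [u v /phi_inj [] // | u v /(copy_arc i) /paths // | u v u' v' huv huv' ne].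
  apply: arc_disj; try exact: copy_arc.
  by apply: contra ne => /eqP [-> ->].
rewrite -setI_eq0; apply/eqP/setP => a; rewrite !inE.
apply/andP => -[/existsP [u /existsP [v /andP [huv a_in]]]].
move=> /existsP [u' /existsP [v' /andP [huv' a_in']]].
have ne : ((i, u), (i, v)) != ((j, u'), (j, v')) by apply: contra ij => /eqP [-> _ _ _].
by have := arc_disj _ _ _ _ (copy_arc i _ _ huv) (copy_arc j _ _ huv') ne a a_in; rewrite a_in'.
Qed.

Lemma k_disjoint_immersions_map (V W : finType) (g : rel V) (g' : rel W) (f : V -> W) k :
  injective f -> (forall x y, g x y -> g' (f x) (f y)) ->
  contains_k_disjoint_immersions h g k -> contains_k_disjoint_immersions h g' k.
Proof.
move=> f_inj f_homo [phi [P [models disj]]].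
pose f2 (a : V * V) := (f a.1, f a.2).
have f2_inj : injective f2 by move=> [x y] [x' y'] [/f_inj -> /f_inj ->].
have arcs_map i a : a \in model_arcs h (f \o phi i) (fun u v => map f (P i u v)) ->
    exists2 b, b \in model_arcs h (phi i) (P i) & a = f2 b.
  rewrite inE => /existsP [u /existsP [v /andP [huv]]] /=; rewrite path_arcs_map.
  case/mapP=> b b_in ->; exists b => //.
  by rewrite inE; apply/existsP; exists u; apply/existsP; exists v; rewrite huv.
exists (fun i => f \o phi i), (fun i u v => map f (P i u v)); split=> [i | i j ij].
  case: (models i) => phi_inj paths arc_disj; split.
  - exact: inj_comp.
  - move=> u v /paths /and3P [path_P /eqP last_P uniq_P].
    rewrite /dpath /comp last_map last_P eqxx -map_cons (map_inj_uniq f_inj) uniq_P !andbT.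
    exact: homo_path path_P.
  - move=> u v u' v' huv huv' ne a; rewrite /= !path_arcs_map.
    case/mapP=> b b_in ->; apply/mapP => -[b' b'_in /f2_inj eq_b].
    by have := arc_disj _ _ _ _ huv huv' ne b b_in; rewrite eq_b b'_in.
rewrite -setI_eq0; apply/eqP/setP => a; rewrite in_setI in_set0.
apply/andP => -[/arcs_map [b b_in ->] /arcs_map [b' b'_in /f2_inj eq_b]].
by rewrite -eq_b (disjointFr (disj i j ij) b_in) in b'_in.
Qed.

End Copies.

Definition sub_rel (V : finType) (t : rel V) (S : {set V}) : rel {x : V | x \in S} :=
  fun x y => t (val x) (val y).
Arguments sub_rel {V} t S.

Section Layouts.
Variables (V : finType) (t : rel V).

Definition cut_at (S : {set V}) (pos : V -> nat) (j : nat) : {set V * V} :=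
  [set a | [&& induced t S a.1 a.2, j <= pos a.1 & pos a.2 < j]].

Definition layout_of_width (S : {set V}) (pos : V -> nat) (c : nat) : Prop :=
  [/\ {in S &, injective pos}, {in S, forall x, pos x < #|S|} &
      forall j, j <= #|S| -> #|cut_at S pos j| <= c].

Lemma sub_rel_tournament S : tournament t -> tournament (sub_rel t S).
Proof.
move=> [t_irr t_tour]; split=> [x | x y xy]; first exact: t_irr.
by apply: t_tour; apply: contra xy => /eqP /val_inj ->.
Qed.

Lemma layout_of_ctw S c : ctw_le (sub_rel t S) c -> exists pos, layout_of_width S pos c.
Proof.
move=> [sigma [sigma_bij width]].
pose pos x := if insub x is Some y then val (sigma y) else 0.
have posE x (xS : x \in S) : pos x = sigma (Sub x xS) by rewrite /pos insubT.
have card_S : #|{: {x | x \in S}}| = #|S| by rewrite card_sig; apply: eq_card.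
exists pos; split.
- move=> x y xS yS; rewrite (posE x xS) (posE y yS) => /val_inj /(bij_inj sigma_bij).
  by move/(congr1 val).
- by move=> x xS; rewrite posE -card_S.
move=> j j_le; rewrite -card_S in j_le; apply: leq_trans (width j j_le).
pose val2 (a : {x | x \in S} * {x | x \in S}) := (val a.1, val a.2).
apply: leq_trans (leq_imset_card val2 _); apply/subset_leq_card/subsetP => -[x y].
rewrite inE /= => /and3P [/and3P [txy xS yS] jx yj].
apply/imsetP; exists (Sub x xS, Sub y yS) => //.
by rewrite inE /sub_rel /= txy -(posE x xS) -(posE y yS) jx yj.
Qed.

End Layouts.

Lemma induced_layout d (hd : ctw_constant d) (VH V : finType) (h : rel VH) (t : rel V) S k :
  simple_digraph h -> tournament t -> ~ contains_k_disjoint_immersions h (induced t S) k ->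
  exists pos, layout_of_width t S pos (k ^ 2 * (d * dnorm h ^ 2)).
Proof.
move=> h_irr t_tour no_k.
have no_copies : ~ contains_immersion (copies h k) (sub_rel t S).
  move=> /copies_immersion /(k_disjoint_immersions_map val_inj) copies_in_S.
  by apply/no_k/copies_in_S => x y txy; rewrite /induced (valP x) (valP y) !andbT.
have := hd.2 _ _ _ _ (sub_rel_tournament S t_tour) (copies_simple h_irr) no_copies.
by rewrite dnorm_copies expnMn mulnCA; apply: layout_of_ctw.
Qed.

Definition prefix (V : finType) (S : {set V}) (pos : V -> nat) (j : nat) : {set V} :=
  [set x in S | pos x < j].

Definition suffix (V : finType) (S : {set V}) (pos : V -> nat) (j : nat) : {set V} :=
  [set x in S | j <= pos x].

Lemma nat_threshold (P : nat -> Prop) n : ~ P 0 -> P n -> exists2 j, j < n & ~ P j /\ P j.+1.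
Proof.
move=> P0; elim: n => [/P0 //|n IH Pn].
case: (classic (P n)) => [/IH [j j_lt Pj] | nPn]; last by exists n.
by exists j => //; apply: ltnW.
Qed.

Lemma sum_sqr_halves_le k : 4 * (k - k./2) ^ 2 + 4 * k./2 ^ 2 <= 2 * k ^ 2 + 2.
Proof. by move: (k./2) (odd_double_half k) => m; case: (odd k) => /= <-; nia. Qed.

Lemma arcs_induced_sub (V : finType) (t : rel V) (A B : {set V}) :
  A \subset B -> arcs (induced t A) \subset arcs (induced t B).
Proof.
move=> AB; apply/subsetP => a; rewrite !inE => /and3P [ta a1 a2].
by rewrite /induced ta !(subsetP AB).
Qed.

Lemma card_split_hitting_set (T : finType) (FL FR C C' : {set T}) X a b k :
  #|FL| + 2 * X <= 4 * X * a ^ 2 -> #|FR| + 2 * X <= 4 * X * b ^ 2 ->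
  #|C| <= k ^ 2 * X -> #|C'| <= k ^ 2 * X -> 4 * a ^ 2 + 4 * b ^ 2 <= 2 * k ^ 2 + 2 ->
  #|FL :|: FR :|: C :|: C'| + 2 * X <= 4 * X * k ^ 2.
Proof.
move=> FL_card FR_card C_card C'_card /(leq_mul (leqnn X)) halves.
have cardU (A B : {set T}) : #|A :|: B| <= #|A| + #|B| by rewrite cardsU leq_subr.
have := cardU (FL :|: FR :|: C) C'; have := cardU (FL :|: FR) C; have := cardU FL FR.
lia.
Qed.

Section HittingSet.
Variables (VH V : finType) (h : rel VH) (t : rel V) (X : nat).
Hypotheses (h_irr : simple_digraph h) (h_sc : strongly_connected h) (h_arc : has_arc h).
Hypothesis t_irr : irreflexive t.
Hypothesis layout_exists : forall k S,
  ~ contains_k_disjoint_immersions h (induced t S) k ->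
  exists pos, layout_of_width t S pos (k ^ 2 * X).

Lemma layout_threshold (S : {set V}) (pos : V -> nat) a b :
  0 < a -> {in S, forall x, pos x < #|S|} ->
  contains_k_disjoint_immersions h (induced t S) a ->
  ~ contains_k_disjoint_immersions h (induced t S) (a + b) ->
  exists2 j, j < #|S| &
    ~ contains_k_disjoint_immersions h (induced t (prefix S pos j)) a /\
    ~ contains_k_disjoint_immersions h (induced t (suffix S pos j.+1)) b.
Proof.
move=> a_gt0 pos_lt has_a no_ab.
pose has_a_below j := contains_k_disjoint_immersions h (induced t (prefix S pos j)) a.
have [||j j_lt [no_a has_a']] := @nat_threshold has_a_below #|S|.
- move=> /(k_disjoint_immersions_contains a_gt0) /(immersion_has_arc h_irr h_arc).
  by case=> x [y /and3P [_]]; rewrite inE ltn0 andbF.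
- apply: k_disjoint_immersions_sub has_a => x y /and3P [txy xS yS].
  by rewrite /induced txy !inE xS yS !pos_lt.
exists j => //; split=> // has_b; apply/no_ab/(k_disjoint_immersions_add _ _ _ has_a' has_b).
- by move=> x y /and3P [txy]; rewrite !inE /induced txy => /andP [-> _] /andP [-> _].
- by move=> x y /and3P [txy]; rewrite !inE /induced txy => /andP [-> _] /andP [-> _].
- move=> x y /and3P [_ + _]; rewrite /induced !inE => /andP [_ x_lt].
  by rewrite [j.+1 <= pos x]leqNgt x_lt !andbF.
Qed.

Lemma no_immersion_off_cuts (S : {set V}) (pos : V -> nat) j (FL FR F : {set V * V}) :
  {in S &, injective pos} -> FL \subset F -> FR \subset F ->
  cut_at t S pos j \subset F -> cut_at t S pos j.+1 \subset F ->
  ~ contains_immersion h (del_arcs (induced t (prefix S pos j)) FL) ->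
  ~ contains_immersion h (del_arcs (induced t (suffix S pos j.+1)) FR) ->
  ~ contains_immersion h (del_arcs (induced t S) F).
Proof.
move=> pos_inj FL_F FR_F cut_j cut_j1 no_L no_R [phi [P model]].
pose block x := (j <= pos x) + (j < pos x).
have block_homo : {homo block : x y / del_arcs (induced t S) F x y >-> x <= y}.
  move=> x y /andP [xy_S xy_F]; rewrite leqNgt; apply: contra xy_F => back.
  have : (x, y) \in cut_at t S pos j :|: cut_at t S pos j.+1.
    by rewrite !inE /= xy_S /=; move: back; rewrite /block; lia.
  by case/setUP; [apply: (subsetP cut_j) | apply: (subsetP cut_j1)].
case: h_arc => u0 _.
have := immersion_model_level u0 h_sc block_homo model.
move: (block (phi u0)) => [|[|c]] model_c.
- apply: no_L; exists phi, P; apply: immersion_model_sub model_c => x y.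
  case/and3P=> /andP [/and3P [txy xS yS] xy_F] /eqP x0 /eqP y0.
  rewrite /del_arcs /induced txy !inE xS yS (contra (subsetP FL_F _)) //=.
  by move: x0 y0; rewrite /block; lia.
- have [x [y]] := immersion_has_arc h_irr h_arc (ex_intro _ phi (ex_intro _ P model_c)).
  case/and3P=> /andP [/and3P [txy xS yS] _] /eqP x1 /eqP y1.
  have pos_xy : pos x = pos y by move: x1 y1; rewrite /block; lia.
  by rewrite (pos_inj _ _ xS yS pos_xy) t_irr in txy.
- apply: no_R; exists phi, P; apply: immersion_model_sub model_c => x y.
  case/and3P=> /andP [/and3P [txy xS yS] xy_F] /eqP x2 /eqP y2.
  rewrite /del_arcs /induced txy !inE xS yS (contra (subsetP FR_F _)) //=.
  by move: x2 y2; rewrite /block; lia.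
Qed.

Lemma hitting_set_induced k S :
  0 < k -> ~ contains_k_disjoint_immersions h (induced t S) k ->
  exists F : {set V * V},
    [/\ F \subset arcs (induced t S), #|F| + 2 * X <= 4 * X * k ^ 2 &
        ~ contains_immersion h (del_arcs (induced t S) F)].
Proof.
elim/ltn_ind: k S => k IH S k_gt0 no_k.
have [k_le1 | k_gt1] := leqP k 1.
  have k1 : k = 1 by lia.
  rewrite k1 in no_k *.
  exists set0; split; [exact: sub0set | by rewrite cards0; lia |].
  move=> /contains_one_immersion has_1; apply: no_k.
  by apply: k_disjoint_immersions_sub has_1 => x y /andP [].
set b := k./2; set a := k - b.
have b_gt0 : 0 < b by rewrite half_gt0.
have b_le_a : b <= a by rewrite /a /b; move: (odd_double_half k); lia.
have [a_lt b_lt a_gt0 ab] : [/\ a < k, b < k, 0 < a & a + b = k] by rewrite /a; split; lia.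
have halves : 4 * a ^ 2 + 4 * b ^ 2 <= 2 * k ^ 2 + 2 := sum_sqr_halves_le k.
clearbody a b.
have [has_a | no_a] := classic (contains_k_disjoint_immersions h (induced t S) a); last first.
  have [F [F_sub F_card F_free]] := IH a a_lt S a_gt0 no_a.
  exists F; split=> //; apply: leq_trans F_card _.
  by rewrite leq_mul2l leq_exp2r // (ltnW a_lt) orbT.
have [pos [pos_inj pos_lt width]] := layout_exists no_k.
have no_ab : ~ contains_k_disjoint_immersions h (induced t S) (a + b) by rewrite ab.
have [j j_lt [no_L no_R]] := layout_threshold a_gt0 pos_lt has_a no_ab.
have [FL [FL_sub FL_card FL_free]] := IH a a_lt _ a_gt0 no_L.
have [FR [FR_sub FR_card FR_free]] := IH b b_lt _ b_gt0 no_R.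
have cut_sub i : cut_at t S pos i \subset arcs (induced t S).
  by apply/subsetP => e; rewrite !inE => /andP [].
have prefix_sub : prefix S pos j \subset S by apply/subsetP => x; rewrite inE => /andP [].
have suffix_sub : suffix S pos j.+1 \subset S by apply/subsetP => x; rewrite inE => /andP [].
exists (FL :|: FR :|: cut_at t S pos j :|: cut_at t S pos j.+1); split.
- rewrite !subUset !cut_sub !andbT.
  by rewrite (subset_trans FL_sub) ?(subset_trans FR_sub) // arcs_induced_sub.
- exact: card_split_hitting_set FL_card FR_card (width j (ltnW j_lt)) (width j.+1 j_lt) halves.
- apply: (no_immersion_off_cuts pos_inj _ _ _ _ FL_free FR_free);
    by apply/subsetP => e; rewrite !inE => ->; rewrite ?orbT.
Qed.

End HittingSet.

Theorem lemma16 (d : nat) (hd : ctw_constant d)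
  (VH : finType) (h : rel VH) (V : finType) (t : rel V) (k : nat) :
  simple_digraph h -> strongly_connected h -> has_arc h ->
  0 < k -> tournament t ->
  ~ contains_k_disjoint_immersions h t k ->
  exists F : {set V * V},
    [/\ F \subset arcs t,
        #|F| <= 6 * d * dnorm h ^ 2 * k ^ 2 &
        ~ contains_immersion h (del_arcs t F)].
Proof.
move=> h_irr h_sc h_arc k_gt0 t_tour no_k.
have no_k_induced : ~ contains_k_disjoint_immersions h (induced t setT) k.
  by apply: contra_not no_k; apply: k_disjoint_immersions_sub => x y /andP [].
have [F [F_sub F_card F_free]] := hitting_set_induced h_irr h_sc h_arc t_tour.1
  (fun k' S => induced_layout hd h_irr t_tour) k_gt0 no_k_induced.
exists F; split.
- by apply: subset_trans F_sub _; apply/subsetP => a; rewrite !inE => /andP [].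
- by move: F_card; rewrite -!mulnA; lia.
- apply: contra_not F_free; apply: contains_immersion_sub => x y /andP [txy xy_F].
  by rewrite /del_arcs /induced txy !inE.
Qed.
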